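(* Let $\lambda_1,\lambda_2,\sigma_1,\sigma_2\in\mathbb{C}^*$ and $\eta_1,\eta_2\in\mathbb{C}$ with $\lambda_1\neq\lambda_2$. Let $v$ be a nonzero element of $\Omega(\lambda_1,\eta_1,\sigma_1,0)\otimes\Omega(\lambda_2,\eta_2,\sigma_2,0)$ with $\deg(v)=(p',q',s',t')$. Then: (1) if $p'>0$, then $\deg(I_0v-\sigma_1v-\sigma_2v)=(p'-1,q',s',t')$; (2) if $p'=0$ and $q'>0$, then there exists $m\in\mathbb{Z}$ with $\deg(I_mv-\lambda_1^m\sigma_1v-\lambda_2^m\sigma_2v)=(0,q'-1,s',t')$; (3) if $p'=q'=0$ and $s'>0$, then there exists $m\in\mathbb{Z}$ with $\deg(I_mv-\lambda_1^m\sigma_1v-\lambda_2^m\sigma_2v)=(0,0,s'-1,t')$; (4) if $p'=q'=s'=0$ and $t'>0$, then there exists $m\in\mathbb{Z}$ with $\deg(I_mv-\lambda_1^m\sigma_1v-\lambda_2^m\sigma_2v)=(0,0,0,t'-1)$.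
   Context: The planar Galilean conformal algebra $\mathcal{G}$ is the complex Lie algebra with basis $\{L_m,H_m,I_m,J_m\mid m\in\mathbb{Z}\}$ and brackets $[L_m,L_n]=(n-m)L_{m+n}$, $[L_m,H_n]=nH_{m+n}$, $[L_m,I_n]=(n-m)I_{m+n}$, $[L_m,J_n]=(n-m)J_{m+n}$, $[H_m,I_n]=I_{m+n}$, $[H_m,J_n]=-J_{m+n}$, and $[H_m,H_n]=[I_m,I_n]=[J_m,J_n]=[I_m,J_n]=0$ for all $m,n\in\mathbb{Z}$. For $\lambda,\sigma\in\mathbb{C}^*$, $\eta\in\mathbb{C}$, the module $\Omega(\lambda,\eta,\sigma,0)$ is a polynomial algebra in two variables with $L_m f(X,Y)=\lambda^m(Y-mX+m\eta)f(X,Y-m)$, $H_m f(X,Y)=\lambda^m X f(X,Y-m)$, $I_m f(X,Y)=\lambda^m\sigma f(X-1,Y-m)$, $J_m f(X,Y)=0$. Here $\Omega(\lambda_1,\eta_1,\sigma_1,0)=\mathbb{C}[X,Y]$ and $\Omega(\lambda_2,\eta_2,\sigma_2,0)=\mathbb{C}[X_1,Y_1]$ (same formulas with $X_1,Y_1$). The tensor product has action $x(v\otimes w)=xv\otimes w+v\otimes xw$. Total order $\succ$ on $\mathbb{N}^4$: with $\mathbf{w}(\bar\alpha)=\alpha_1+\alpha_2+\alpha_3+\alpha_4$, $\bar\alpha\succ\bar\beta$ iff $\mathbf{w}(\bar\alpha)>\mathbf{w}(\bar\beta)$, or the weights are equal and $(\alpha_4,\alpha_3,\alpha_2,\alpha_1)$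 is lexicographically larger than $(\beta_4,\beta_3,\beta_2,\beta_1)$. For nonzero $v=\sum\beta_{ijkl}X^iY^j\otimes X_1^kY_1^l$, $\mathrm{Supp}(v)=\{(i,j,k,l)\mid\beta_{ijkl}\neq0\}$ and $\deg(v)$ is the $\succ$-maximal element of $\mathrm{Supp}(v)$. *)

From mathcomp Require Import all_boot all_algebra.
From mathcomp Require Import Rstruct.
From mathcomp.real_closed Require Import complex.
From mathcomp Require Import mpoly.
Set Implicit Arguments. Unset Strict Implicit. Unset Printing Implicit Defensive.
Import GRing.Theory.
Local Open Scope ring_scope.

Definition CC : numClosedFieldType := complex Rdefinitions.R.

(* Omega(l1,e1,s1,0) (x) Omega(l2,e2,s2,0) = C[X,Y] (x) C[X1,Y1], identified
   with C[X,Y,X1,Y1]; variables 0,1,2,3 stand for X, Y, X1, Y1, and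
   X^i Y^j (x) X1^k Y1^l is the monomial with exponent (i,j,k,l). *)
Definition TP := {mpoly CC[4]}.

Definition var (i : nat) : TP := 'X_(inord i).

Definition shift1 (m : int) (f : TP) : TP :=
  f \mPo [tuple var 0 - 1; var 1 - m%:~R; var 2; var 3].
Definition shift2 (m : int) (f : TP) : TP :=
  f \mPo [tuple var 0; var 1; var 2 - 1; var 3 - m%:~R].

(* Action of I_m on the tensor product: I_m (f (x) g) = I_m f (x) g + f (x) I_m g,
   with I_m f(X,Y) = lambda^m sigma f(X-1,Y-m). *)
Definition actI (l1 s1 l2 s2 : CC) (m : int) (v : TP) : TP :=
  (l1 ^ m * s1) *: shift1 m v + (l2 ^ m * s2) *: shift2 m v.

Definition mk4 (a b c d : nat) : 'X_{1..4} := Multinom [tuple a; b; c; d].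
Definition e4 (a : 'X_{1..4}) (i : nat) : nat := a (inord i).

Definition wt (a : 'X_{1..4}) : nat := e4 a 0 + e4 a 1 + e4 a 2 + e4 a 3.

Definition lexgt4 (a b : 'X_{1..4}) : bool :=
  (e4 b 3 < e4 a 3)%N ||
  ((e4 a 3 == e4 b 3) && ((e4 b 2 < e4 a 2)%N ||
  ((e4 a 2 == e4 b 2) && ((e4 b 1 < e4 a 1)%N ||
  ((e4 a 1 == e4 b 1) && (e4 b 0 < e4 a 0)%N))))).

Definition succ4 (a b : 'X_{1..4}) : bool :=
  (wt b < wt a)%N || ((wt a == wt b) && lexgt4 a b).

Definition deg_is (v : TP) (d : 'X_{1..4}) : Prop :=
  d \in msupp v /\ (forall e, e \in msupp v -> e != d -> succ4 d e).

(* When every monomial of v has total degree at most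
   |e|+1, the binomial expansion of a translate shows that the coefficient of
   the monomial e in I_m v - l1^m s1 v - l2^m s2 v is
     -(l1^m (a + b m) + l2^m (c + g m)),
   where a, b, c, g are s1, s1, s2, s2 times (e_i + 1) v_(e + eps_i) for
   i = 0, 1, 2, 3, eps_i being the unit exponents.
   Take e = deg v - eps_k, where the coordinates of e before k vanish.  Then
   every e' above e has all of e' + eps_i above deg v, so the coefficients of
   the difference above e vanish; at e itself the k-th of a, b, c, g is
   nonzero.  As l1 <> l2, the sequence l1^m (a + b m) + l2^m (c + g m) cannot
   vanish at m = 0, 1, 2, 3, which gives the required m.  For k = 0 even m = 0
   works, because then c = 0. *)

From mathcomp Require Import all_boot all_algebra.
From mathcomp Require Import mpoly.
From mathcomp Require Import ring zify.
Set Implicit Arguments. Unset Strict Implicit. Unset Printing Implicit Defensive.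
Import GRing.Theory Num.Theory.
Local Open Scope ring_scope.

Section Translation.
Variables (R : comNzRingType) (n : nat).

Definition translation (c : n.-tuple R) : n.-tuple {mpoly R[n]} :=
  [tuple 'X_i - (tnth c i)%:MP | i < n].

Definition translation_coef (c : R) (a r : nat) : R := 'C(a, r)%:R * (- c) ^+ (a - r).

Lemma translation_coef_small c a r : (a < r)%N -> translation_coef c a r = 0.
Proof. by move=> lt_ar; rewrite /translation_coef bin_small ?mul0r. Qed.

Lemma translation_coefnn c a : translation_coef c a a = 1.
Proof. by rewrite /translation_coef binn subnn mulr1. Qed.

Lemma translation_coefSn c a : translation_coef c a.+1 a = - (a.+1%:R * c).
Proof. by rewrite /translation_coef binSn subSnn expr1 mulrN. Qed.

Lemma exprXsubC (i : 'I_n) (c : R) a N : (a < N)%N ->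
  ('X_i - c%:MP) ^+ a = \sum_(r < N) translation_coef c a r *: 'X_i ^+ r :> {mpoly R[n]}.
Proof.
move=> lt_aN; rewrite addrC exprDn.
rewrite (big_ord_widen N (fun r : nat => (- c%:MP) ^+ (a - r) * 'X_i ^+ r *+ 'C(a, r)) lt_aN).
rewrite big_mkcond /=.
apply: eq_bigr => r _; rewrite ltnS.
case: leqP => [_ | lt_ar]; last by rewrite translation_coef_small ?scale0r.
by rewrite -rmorphN -rmorphXn mul_mpolyC -scaler_nat scalerA.
Qed.

Lemma mnm_le_mdeg (m : 'X_{1..n}) i : (m i <= mdeg m)%N.
Proof. by rewrite mdegE (bigD1 i) //= leq_addr. Qed.

Lemma mnm_sumU (f : 'I_n -> nat) j : (\sum_i U_(i) *+ f i)%MM j = f j.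
Proof.
rewrite mnm_sumE (bigD1 j) //= big1 => [|i ne_ij]; last by rewrite mulmnE mnm1E (negbTE ne_ij).
by rewrite mulmnE mnm1E eqxx mul1n addn0.
Qed.

Lemma mcoeff_translationX (c : n.-tuple R) (d e : 'X_{1..n}) :
  ('X_[d] \mPo translation c)@_e = \prod_(i < n) translation_coef (tnth c i) (d i) (e i).
Proof.
pose N := (mdeg d + mdeg e).+1.
have ltdN i : (d i < N)%N by rewrite ltnS (leq_trans (mnm_le_mdeg d i)) ?leq_addr.
have lteN i : (e i < N)%N by rewrite ltnS (leq_trans (mnm_le_mdeg e i)) ?leq_addl.
rewrite comp_mpolyX.
rewrite (eq_bigr (fun i => \sum_(r < N) translation_coef (tnth c i) (d i) r *: 'X_i ^+ r));
  last by move=> i _; rewrite tnth_mktuple (exprXsubC _ _ (ltdN i)).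
rewrite bigA_distr_bigA /= raddf_sum /=.
rewrite (eq_bigr (fun f : {ffun 'I_n -> 'I_N} =>
    \prod_(i < n) translation_coef (tnth c i) (d i) (f i) *
    ((\sum_(i < n) U_(i) *+ f i)%MM == e)%:R)); last first.
  move=> f _; rewrite scaler_prod (@mprodXnE _ _ _ (fun i => U_(i)%MM)).
  by rewrite mcoeffZ mcoeffX.
pose f0 : {ffun 'I_n -> 'I_N} := [ffun i => inord (e i)].
rewrite (bigD1 f0) //= [X in _ + X]big1 ?addr0 => [|f ne_f_f0].
  have -> : (\sum_i U_(i) *+ f0 i)%MM = e by apply/mnmP => j; rewrite mnm_sumU ffunE inordK.
  by rewrite eqxx mulr1; apply: eq_bigr => i _; rewrite ffunE inordK.
case: eqP => [fe | _]; last by rewrite mulr0.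
case/eqP: ne_f_f0; apply/ffunP => i; apply/val_inj.
by rewrite ffunE /= inordK // -fe mnm_sumU.
Qed.

Lemma mcoeff_translation (c : n.-tuple R) (g : {mpoly R[n]}) e :
  (g \mPo translation c)@_e =
  \sum_(d <- msupp g) g@_d * \prod_(i < n) translation_coef (tnth c i) (d i) (e i).
Proof.
rewrite comp_mpolyEX raddf_sum; apply: eq_bigr => d _ /=.
by rewrite mcoeffZ mcoeff_translationX.
Qed.

Lemma prod_translation_coef_near (c : n.-tuple R) (d e : 'X_{1..n}) :
  (mdeg d <= (mdeg e).+1)%N ->
  \prod_(i < n) translation_coef (tnth c i) (d i) (e i) =
  (d == e)%:R - \sum_(i < n) (d == (e + U_(i))%MM)%:R * ((e i).+1%:R * tnth c i).
Proof.
move=> deg_d; have [le_ed | not_le_ed] := boolP (e <= d)%MM; last first.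
  have /existsP[j lt_dj] : [exists j, (d j < e j)%N].
    apply: contraR not_le_ed; rewrite negb_exists => /forallP ge_de.
    by apply/mnm_lepP => i; rewrite leqNgt ge_de.
  have ne_d (m : 'X_{1..n}) : (e <= m)%MM -> (d == m) = false.
    by move=> /mnm_lepP /(_ j) le_em; apply: contraTF lt_dj => /eqP->; rewrite -leqNgt.
  rewrite (bigD1 j) //= translation_coef_small // mul0r ne_d ?lepm_refl //.
  by rewrite big1 ?subr0 // => i _; rewrite ne_d ?mul0r // lem_addr.
have deg_de : (mdeg (d - e) <= 1)%N.
  by move: deg_d; rewrite -{1}(submK le_ed) mdegD -addn1 addnC leq_add2l.
rewrite -(submK le_ed) addmC; move: (d - e)%MM deg_de => m.
have addU_neq i : ((e + U_(i))%MM == e) = false.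
  by rewrite -[X in _ == X]addm0 eqm_add2l mnm1_eq0.
rewrite leq_eqVlt ltnS leqn0 mdeg_eq0 => /orP[/mdeg1P[j /eqP ->] | /eqP ->]; last first.
  rewrite addm0 eqxx [X in _ - X]big1 => [|i _]; last by rewrite eq_sym addU_neq mul0r.
  by rewrite subr0 big1 // => i _; rewrite translation_coefnn.
rewrite addU_neq sub0r (bigD1 j) //= big1 => [|i ne_ij]; last first.
  by rewrite mnmDE mnm1E eq_sym (negbTE ne_ij) addn0 translation_coefnn.
rewrite mnmDE mnm1E eqxx addn1 translation_coefSn mulr1.
rewrite (bigD1 j) //= eqxx mul1r big1 ?addr0 // => i ne_ij.
by rewrite eqm_add2l eq_mnm1 eq_sym (negbTE ne_ij) mul0r.
Qed.

Lemma sum_msupp_mcoeff_eq (g : {mpoly R[n]}) a :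
  \sum_(d <- msupp g) g@_d * (d == a)%:R = g@_a.
Proof.
have [a_g | a_nsupp] := boolP (a \in msupp g).
  rewrite (bigD1_seq a) ?msupp_uniq //= eqxx mulr1 big1 ?addr0 // => d ne_da.
  by rewrite (negbTE ne_da) mulr0.
rewrite big1_seq => [|d /= d_g]; last first.
  by rewrite (_ : (d == a) = false) ?mulr0 //; apply: contraNF a_nsupp => /eqP <-.
by move: a_nsupp; rewrite mcoeff_msupp negbK => /eqP ->.
Qed.

Lemma mcoeff_translation_near (c : n.-tuple R) (g : {mpoly R[n]}) e :
  (forall d, d \in msupp g -> (mdeg d <= (mdeg e).+1)%N) ->
  (g \mPo translation c)@_e =
  g@_e - \sum_(i < n) tnth c i * ((e i).+1%:R * g@_(e + U_(i))).
Proof.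
move=> deg_g; rewrite mcoeff_translation.
rewrite (eq_big_seq (fun d => g@_d * (d == e)%:R -
    \sum_(i < n) g@_d * ((d == (e + U_(i))%MM)%:R * ((e i).+1%:R * tnth c i)))); last first.
  by move=> d d_g; rewrite prod_translation_coef_near ?deg_g // mulrBr mulr_sumr.
rewrite sumrB sum_msupp_mcoeff_eq exchange_big /=; congr (_ - _).
apply: eq_bigr => i _; rewrite -(sum_msupp_mcoeff_eq g (e + U_(i))%MM) !mulr_sumr.
by apply: eq_bigr => d _; ring.
Qed.

End Translation.

Lemma exp_affine_sum_eq0 (K : idomainType) (l1 l2 a b c g : K) :
  l2 != 0 -> l1 != l2 ->
  (forall k, (k < 4)%N -> l1 ^+ k * (a + b * k%:R) + l2 ^+ k * (c + g * k%:R) = 0) ->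
  c = 0 /\ g = 0.
Proof.
move=> nz_l2 ne_l12 F0; pose F k := l1 ^+ k * (a + b * k%:R) + l2 ^+ k * (c + g * k%:R).
(* With E the shift k -> k + 1, (E - l1)^2 (E - l2) annihilates every term of F
   but the g-term, and (E - l1)^2 every term but the c- and g-terms. *)
have nz_l21 : l2 - l1 != 0 by rewrite subr_eq0 eq_sym.
have g0 : g = 0.
  have : g * l2 * (l2 - l1) ^+ 2 = F 3%N - (l1 *+ 2 + l2) * F 2%N
      + (l1 ^+ 2 + l1 * l2 *+ 2) * F 1%N - l1 ^+ 2 * l2 * F 0%N by rewrite /F; ring.
  rewrite /F !F0 // !mulr0 !subr0 !addr0 => /eqP.
  by rewrite !mulf_eq0 (negbTE nz_l2) (negbTE nz_l21) !orbF => /eqP.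
split=> //; have : c * (l2 - l1) ^+ 2 = l1 ^+ 2 * F 0%N - l1 *+ 2 * F 1%N + F 2%N.
  by rewrite /F g0; ring.
rewrite /F !F0 // !mulr0 subr0 addr0 => /eqP.
by rewrite !mulf_eq0 (negbTE nz_l21) !orbF => /eqP.
Qed.

Lemma exp_affine_sum_neq0 (K : idomainType) (l1 l2 a b c g : K) :
  l1 != 0 -> l2 != 0 -> l1 != l2 -> [|| a != 0, b != 0, c != 0 | g != 0] ->
  exists2 k, (k < 4)%N & l1 ^+ k * (a + b * k%:R) + l2 ^+ k * (c + g * k%:R) != 0.
Proof.
move=> nz_l1 nz_l2 ne_l12 nz_coef.
have [/existsP[k nz_Fk] | ] :=
  boolP [exists k : 'I_4, l1 ^+ k * (a + b * k%:R) + l2 ^+ k * (c + g * k%:R) != 0].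
  by exists k.
rewrite negb_exists => /forallP F0.
have {}F0 k : (k < 4)%N -> l1 ^+ k * (a + b * k%:R) + l2 ^+ k * (c + g * k%:R) = 0.
  by move=> lt_k4; apply/eqP; rewrite -[_ == 0]negbK (F0 (Ordinal lt_k4)).
have [c0 g0] := exp_affine_sum_eq0 nz_l2 ne_l12 F0.
have [a0 b0] : a = 0 /\ b = 0.
  apply: (@exp_affine_sum_eq0 _ l2 l1 c g a b nz_l1); first by rewrite eq_sym.
  by move=> k /F0; rewrite addrC.
by move: nz_coef; rewrite a0 b0 c0 g0 eqxx.
Qed.

Lemma e4_inj (a b : 'X_{1..4}) : (forall i, (i < 4)%N -> e4 a i = e4 b i) -> a = b.
Proof. by move=> eq_ab; apply/mnmP => i; rewrite -[i]inord_val; apply: eq_ab. Qed.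

Lemma e4_mk4 a b c d i : (i < 4)%N -> e4 (mk4 a b c d) i = nth 0%N [:: a; b; c; d] i.
Proof. by move=> lti; rewrite /e4 (mnm_nth 0%N) inordK. Qed.

Lemma e4D (a b : 'X_{1..4}) i : e4 (a + b)%MM i = (e4 a i + e4 b i)%N.
Proof. by rewrite /e4 mnmDE. Qed.

Lemma e4U k i : (k < 4)%N -> (i < 4)%N -> e4 U_(inord k) i = (k == i).
Proof.
move=> ltk lti; rewrite /e4 mnm1E; congr (nat_of_bool _).
by apply/eqP/eqP => [/(congr1 val)|->//]; rewrite /= !inordK.
Qed.

Lemma wt_mdeg e : wt e = mdeg e.
Proof.
rewrite mdegE (eq_bigr (fun i : 'I_4 => e4 e i)) => [|i _]; last by rewrite /e4 inord_val.
by rewrite !big_ord_recl big_ord0 /wt /= !addnA addn0.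
Qed.

Lemma mk4_addU a b c d k : (k < 4)%N ->
  (mk4 a b c d + U_(inord k))%MM =
  mk4 (a + (k == 0)) (b + (k == 1)) (c + (k == 2)) (d + (k == 3)).
Proof.
move=> ltk; apply: e4_inj => i lti; rewrite e4D e4U // !e4_mk4 //.
by case: i lti => [|[|[|[|]]]].
Qed.

Lemma succ4_asym e f : succ4 e f -> ~~ succ4 f e.
Proof. by rewrite /succ4 /lexgt4; lia. Qed.

Lemma succ4_mdeg e f : succ4 e f -> (mdeg f <= mdeg e)%N.
Proof. by rewrite -!wt_mdeg /succ4; lia. Qed.

Lemma succ4_total e f : e != f -> succ4 e f || succ4 f e.
Proof.
apply: contraNT; rewrite negb_or /succ4 /lexgt4 /wt => not_succ; apply/eqP/e4_inj.
by case=> [|[|[|[|]]]] // _; lia.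
Qed.

Lemma succ4_addU (e f : 'X_{1..4}) i k : (i < 4)%N -> (k < 4)%N ->
  (forall j, (j < k)%N -> e4 f j = 0%N) ->
  succ4 e f -> succ4 (e + U_(inord i))%MM (f + U_(inord k))%MM.
Proof.
move=> lti ltk f0; have := f0 0%N; have := f0 1%N; have := f0 2%N.
rewrite /succ4 /lexgt4 /wt !e4D !e4U //.
by case: i lti => [|[|[|[|]]]] // _; case: k ltk {f0} => [|[|[|[|]]]] // _ /=; lia.
Qed.

Lemma translation4 (a b c d : CC) :
  translation [tuple a; b; c; d] =
  [tuple var 0 - a%:MP; var 1 - b%:MP; var 2 - c%:MP; var 3 - d%:MP].
Proof.
apply: eq_from_tnth => i; rewrite tnth_mktuple !(tnth_nth 0) /var.
by case: i => [[|[|[|[|]]]] lt_i] //=; congr ('X_ _ - _); apply: val_inj; rewrite /= inordK.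
Qed.

Lemma shift1_translation m f : shift1 m f = f \mPo translation [tuple 1; m%:~R; 0; 0].
Proof. by rewrite translation4 rmorph_int mpolyC1 mpolyC0 !subr0. Qed.

Lemma shift2_translation m f : shift2 m f = f \mPo translation [tuple 0; 0; 1; m%:~R].
Proof. by rewrite translation4 rmorph_int mpolyC1 mpolyC0 !subr0. Qed.

Lemma sum_tuple4 (R : pzSemiRingType) (a b c d : R) (F : 'I_4 -> R) :
  \sum_(i < 4) tnth [tuple a; b; c; d] i * F i =
  a * F (inord 0) + b * F (inord 1) + c * F (inord 2) + d * F (inord 3).
Proof.
rewrite !big_ord_recl big_ord0 addr0 !addrA.
by congr (_ + _ + _ + _); congr (_ * F _); apply: val_inj; rewrite /= inordK.
Qed.

Lemma deg_is_mcoeff v D : deg_is v D -> v@_D != 0.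
Proof. by case; rewrite mcoeff_msupp. Qed.

Lemma deg_is_mdeg v D d : deg_is v D -> d \in msupp v -> (mdeg d <= mdeg D)%N.
Proof.
case=> _ maxD d_v; have [->//|ne_dD] := eqVneq d D.
by move: (maxD d d_v ne_dD); rewrite -!wt_mdeg /succ4; lia.
Qed.

Lemma deg_is_addU_mdeg v f i d :
  deg_is v (f + U_(i)) -> d \in msupp v -> (mdeg d <= (mdeg f).+1)%N.
Proof. by move=> deg_v /(deg_is_mdeg deg_v); rewrite mdegD mdeg1 addn1. Qed.

Lemma deg_is_mcoeff_succ4 v D e : deg_is v D -> succ4 e D -> v@_e = 0.
Proof.
case=> _ maxD succ_eD; have not_succ_De := succ4_asym succ_eD.
apply/eqP; rewrite -[_ == 0]negbK -mcoeff_msupp; apply/negP => e_v.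
have [eD|ne_eD] := eqVneq e D; first by subst e; rewrite succ_eD in not_succ_De.
by rewrite (maxD e e_v ne_eD) in not_succ_De.
Qed.

Lemma deg_isP w f : w@_f != 0 -> (forall e, succ4 e f -> w@_e = 0) -> deg_is w f.
Proof.
move=> nz_f above0; split=> [|e e_w ne_ef]; first by rewrite mcoeff_msupp.
case/orP: (succ4_total ne_ef) => // succ_ef.
by move: e_w; rewrite mcoeff_msupp above0 ?eqxx.
Qed.

Section ReducedAction.
Variables (l1 s1 l2 s2 : CC).

Definition reducedI (m : int) (v : TP) : TP :=
  actI l1 s1 l2 s2 m v - (l1 ^ m * s1) *: v - (l2 ^ m * s2) *: v.

Definition raise_coef (v : TP) (e : 'X_{1..4}) (i : nat) : CC :=
  (e4 e i).+1%:R * v@_(e + U_(inord i)).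

Lemma mcoeff_reducedI m v e : (forall d, d \in msupp v -> (mdeg d <= (mdeg e).+1)%N) ->
  (reducedI m v)@_e =
  - (l1 ^ m * (s1 * raise_coef v e 0 + s1 * raise_coef v e 1 * m%:~R)
     + l2 ^ m * (s2 * raise_coef v e 2 + s2 * raise_coef v e 3 * m%:~R)).
Proof.
move=> deg_v; rewrite /reducedI /actI.
have := mcoeff_translation_near [tuple 1; m%:~R; 0; 0] deg_v.
have := mcoeff_translation_near [tuple 0; 0; 1; m%:~R] deg_v.
rewrite -shift1_translation -shift2_translation.
(* Abstracting the translates keeps [mcoeffZ] from unfolding [comp_mpoly]. *)
move: (shift1 m v) (shift2 m v) => S1 S2 coef_S2 coef_S1.
rewrite !mcoeffB mcoeffD !mcoeffZ coef_S1 coef_S2.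
rewrite !sum_tuple4 /raise_coef /e4; ring.
Qed.

Lemma deg_is_reducedI m v f k : (k < 4)%N -> (forall j, (j < k)%N -> e4 f j = 0%N) ->
  deg_is v (f + U_(inord k)) -> (reducedI m v)@_f != 0 -> deg_is (reducedI m v) f.
Proof.
move=> ltk f0 deg_v nz_f; apply: deg_isP nz_f _ => e succ_ef.
rewrite mcoeff_reducedI => [|d /(deg_is_addU_mdeg deg_v) deg_d]; last first.
  by rewrite (leq_trans deg_d) // ltnS succ4_mdeg.
rewrite /raise_coef !(deg_is_mcoeff_succ4 deg_v) ?succ4_addU //.
by rewrite !(mulr0, mul0r, addr0) oppr0.
Qed.

Hypothesis nz_s1 : s1 != 0.

Lemma reducedI0_deg_is v f : deg_is v (f + U_(inord 0)) -> deg_is (reducedI 0 v) f.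
Proof.
move=> deg_v; apply: (deg_is_reducedI _ _ deg_v) => //.
have succ_20 : succ4 (f + U_(inord 2)) (f + U_(inord 0)).
  by rewrite /succ4 /lexgt4 /wt !e4D !e4U //; lia.
rewrite mcoeff_reducedI => [|d]; last exact: deg_is_addU_mdeg deg_v.
rewrite [raise_coef v f 2]/raise_coef (deg_is_mcoeff_succ4 deg_v succ_20) expr0z oppr_eq0.
by rewrite !(mulr0, mul1r, addr0) mulf_neq0 // mulf_neq0 ?pnatr_eq0 ?deg_is_mcoeff.
Qed.

Hypotheses (nz_l1 : l1 != 0) (nz_l2 : l2 != 0) (ne_l12 : l1 != l2) (nz_s2 : s2 != 0).

Lemma exists_reducedI_deg_is v f k : (k < 4)%N -> (forall j, (j < k)%N -> e4 f j = 0%N) ->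
  deg_is v (f + U_(inord k)) -> exists m : int, deg_is (reducedI m v) f.
Proof.
move=> ltk f0 deg_v.
have nz_raise : raise_coef v f k != 0 by rewrite mulf_neq0 ?pnatr_eq0 ?deg_is_mcoeff.
have nz_coef : [|| s1 * raise_coef v f 0 != 0, s1 * raise_coef v f 1 != 0,
                   s2 * raise_coef v f 2 != 0 | s2 * raise_coef v f 3 != 0].
  case: k ltk nz_raise {f0 deg_v} => [|[|[|[|k]]]] ltk nz_raise.
  - by apply/or4P/Or41/mulf_neq0.
  - by apply/or4P/Or42/mulf_neq0.
  - by apply/or4P/Or43/mulf_neq0.
  - by apply/or4P/Or44/mulf_neq0.
  - by exfalso.
have [n _ nz_Fn] := exp_affine_sum_neq0 nz_l1 nz_l2 ne_l12 nz_coef.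
exists n; apply: (deg_is_reducedI ltk f0 deg_v).
rewrite mcoeff_reducedI => [|d]; last exact: deg_is_addU_mdeg deg_v.
by rewrite oppr_eq0 -!exprnP -pmulrn.
Qed.

End ReducedAction.

Theorem lemma4p1 (l1 l2 s1 s2 : CC) (e1 e2 : CC)
  (hl1 : l1 != 0) (hl2 : l2 != 0) (hs1 : s1 != 0) (hs2 : s2 != 0)
  (hl : l1 != l2) (v : TP) (hv : v != 0) (p q s t : nat)
  (hdeg : deg_is v (mk4 p q s t)) :
  [/\ (0 < p)%N ->
        deg_is (actI l1 s1 l2 s2 0 v - s1 *: v - s2 *: v) (mk4 p.-1 q s t),
      p = 0%N -> (0 < q)%N ->
        exists m : int,
          deg_is (actI l1 s1 l2 s2 m v - (l1 ^ m * s1) *: v - (l2 ^ m * s2) *: v)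
                 (mk4 0 q.-1 s t),
      p = 0%N -> q = 0%N -> (0 < s)%N ->
        exists m : int,
          deg_is (actI l1 s1 l2 s2 m v - (l1 ^ m * s1) *: v - (l2 ^ m * s2) *: v)
                 (mk4 0 0 s.-1 t)
    & p = 0%N -> q = 0%N -> s = 0%N -> (0 < t)%N ->
        exists m : int,
          deg_is (actI l1 s1 l2 s2 m v - (l1 ^ m * s1) *: v - (l2 ^ m * s2) *: v)
                 (mk4 0 0 0 t.-1)].
Proof.
split.
- case: p hdeg => // p deg_v _.
  have := reducedI0_deg_is l1 l2 s2 hs1 (v := v) (f := mk4 p q s t).
  rewrite /reducedI expr0z !mul1r; apply.
  by rewrite mk4_addU //= addn1 !addn0.
- move=> p0; subst p; case: q hdeg => // q deg_v _.
  apply: (exists_reducedI_deg_is hs1 hl1 hl2 hl hs2 (k := 1)) => //.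
  + by case=> [|] // _; rewrite e4_mk4.
  + by rewrite mk4_addU //= addn1 !addn0.
- move=> p0 q0; subst p q; case: s hdeg => // s deg_v _.
  apply: (exists_reducedI_deg_is hs1 hl1 hl2 hl hs2 (k := 2)) => //.
  + by case=> [|[|]] // _; rewrite e4_mk4.
  + by rewrite mk4_addU //= addn1 !addn0.
- move=> p0 q0 s0; subst p q s; case: t hdeg => // t deg_v _.
  apply: (exists_reducedI_deg_is hs1 hl1 hl2 hl hs2 (k := 3)) => //.
  + by case=> [|[|[|]]] // _; rewrite e4_mk4.
  + by rewrite mk4_addU //= addn1 !addn0.
Qed.
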